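(* Let $a\in(0,1)$, $r\ge1$, $\theta\in\mathcal{D}_{a,r}$ and $X\sim N(\theta^*,\sigma^2I_d)$. Then $$\mathbb{E}\,\omega\Big(\frac{\langle\theta,X\rangle}{\sigma^2}\Big)>1-e^{-(as/r)^2/5}.$$
   Context: Fix $d\ge1$, $\sigma>0$ and $\theta^*\in\mathbb{R}^d\setminus\{0\}$. Let $\omega(t):=1/(1+e^{-2t})$ and $s:=\|\theta^*\|/\sigma$. For $a\in(0,1)$ and $r\ge1$ define $\mathcal{H}_a:=\{\theta:\langle\theta,\theta^*\rangle\ge a\|\theta^*\|^2\}$, $\mathcal{B}_r:=\{\theta:\|\theta\|\le r\|\theta^*\|\}$ and $\mathcal{D}_{a,r}:=\mathcal{H}_a\cap\mathcal{B}_r$. *)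

From Stdlib Require Import Reals Lra.
Open Scope R_scope.

(* Vectors of R^d are represented as functions nat -> R; only coordinates
   0..d-1 are used. *)
Fixpoint dot (d : nat) (u v : nat -> R) : R :=
  match d with
  | O => 0
  | S k => dot k u v + u k * v k
  end.

Definition vnorm (d : nat) (u : nat -> R) : R := sqrt (dot d u u).

Definition vsub (u v : nat -> R) : nat -> R := fun i => u i - v i.

Definition omega (t : R) : R := / (1 + exp (- (2 * t))).

(* Improper Riemann integral over R: f is Riemann integrable on every
   [-n,n] and these integrals converge to l.  (Used only for nonnegative
   continuous integrands, where this coincides with the Lebesgue integral.) *)
Definition improper_int (f : R -> R) (l : R) : Prop :=
  exists I : nat -> R,
    (forall n : nat, exists pr : Riemann_integrable f (- INR n) (INR n),
        RiemannInt pr = I n) /\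
    Un_cv I l.

Definition upd (x : nat -> R) (k : nat) (t : R) : nat -> R :=
  fun i => if Nat.eqb i k then t else x i.

Fixpoint int_Rd (d : nat) (F : (nat -> R) -> R) (l : R) : Prop :=
  match d with
  | O => l = F (fun _ => 0)
  | S k => exists G : R -> R,
      (forall t, int_Rd k (fun x => F (upd x k t)) (G t)) /\
      improper_int G l
  end.

Definition gauss_density (d : nat) (mu : nat -> R) (sigma : R) (x : nat -> R) : R :=
  / Rpower (2 * PI * sigma ^ 2) (INR d / 2) *
  exp (- (dot d (vsub x mu) (vsub x mu)) / (2 * sigma ^ 2)).

Definition gauss_expect (d : nat) (mu : nat -> R) (sigma : R)
  (g : (nat -> R) -> R) (E : R) : Prop :=
  int_Rd d (fun x => g x * gauss_density d mu sigma x) E.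

Definition in_H (d : nat) (thstar : nat -> R) (a : R) (th : nat -> R) : Prop :=
  dot d th thstar >= a * (vnorm d thstar) ^ 2.
Definition in_B (d : nat) (thstar : nat -> R) (r : R) (th : nat -> R) : Prop :=
  vnorm d th <= r * vnorm d thstar.
Definition in_D (d : nat) (thstar : nat -> R) (a r : R) (th : nat -> R) : Prop :=
  in_H d thstar a th /\ in_B d thstar r th.

(* The expectation is an iterated integral of [omega (<alpha, x>)], [alpha = theta / sigma^2],
   against a product of one-dimensional Gaussian kernels.  Since
   [omega y >= 1 - exp (- lam y)] for [0 <= lam <= 2], integrating out one coordinate at a time
   with the Gaussian moment generating function gives
   [E >= 1 - exp (- lam <theta, theta*> / sigma^2 + lam^2 |theta|^2 / (2 sigma^2))].
   On [D_{a,r}] we have [<theta, theta*> >= a |theta*|^2] and [|theta| <= r |theta*|], and a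
   suitable [lam] brings the exponent below [- (a s / r)^2 / 5].  The iterated integrals exist
   because every partial integral is bounded and Lipschitz in its offset; the normalisation
   rests on [int exp (- t^2) = sqrt PI], proved by differentiating under the integral sign. *)

From Stdlib Require Import Reals Lra Psatz FunctionalExtensionality.
From Coquelicot Require Import Coquelicot.
Open Scope R_scope.

Lemma continuity_of_ex_derive (f : R -> R) : (forall x, ex_derive f x) -> continuity f.
Proof.
  intros Hf x. apply continuity_pt_filterlim.
  apply (ex_derive_continuous (K := R_AbsRing) (V := R_NormedModule)), Hf.
Qed.

Lemma ex_RInt_continuity (f : R -> R) a b : continuity f -> ex_RInt f a b.
Proof.
  intros Hf. apply (ex_RInt_continuous (V := R_CompleteNormedModule)).
  intros x _. apply continuity_pt_filterlim, Hf.
Qed.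

Lemma RInt_comp_scal (f : R -> R) k a b : continuity f ->
  RInt (fun t => k * f (k * t)) a b = RInt f (k * a) (k * b).
Proof.
  intros Hf.
  transitivity (RInt f (k * a + 0) (k * b + 0)); [| now rewrite !Rplus_0_r].
  rewrite <- (RInt_comp_lin (V := R_CompleteNormedModule)) by now apply ex_RInt_continuity.
  apply RInt_ext. intros t _. now rewrite Rplus_0_r.
Qed.

Lemma exp_le_exp x y : x <= y -> exp x <= exp y.
Proof. intros [H | ->]; [apply Rlt_le, exp_increasing, H | apply Rle_refl]. Qed.

(** * The Gaussian integral *)

Definition bell (t : R) : R := exp (- (t * t)).

Lemma continuity_bell : continuity bell.
Proof. apply continuity_of_ex_derive. intros x. unfold bell. auto_derive. auto. Qed.

Lemma ex_RInt_bell a b : ex_RInt bell a b.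
Proof. apply ex_RInt_continuity, continuity_bell. Qed.

Lemma RInt_bell_ge0 x : 0 <= x -> 0 <= RInt bell 0 x.
Proof.
  intros Hx. apply RInt_ge_0; auto using ex_RInt_bell.
  intros t _. apply Rlt_le, exp_pos.
Qed.

Lemma RInt_bell_sym x : RInt bell (- x) x = 2 * RInt bell 0 x.
Proof.
  rewrite <- (RInt_Chasles (V := R_CompleteNormedModule) bell (- x) 0 x) by apply ex_RInt_bell.
  assert (Hneg : RInt bell (- x) 0 = RInt bell 0 x).
  { transitivity (RInt bell (-1 * x) (-1 * 0)); [f_equal; ring|].
    rewrite <- (RInt_comp_scal bell) by apply continuity_bell.
    transitivity (RInt (fun t => scal (-1) (bell t)) x 0).
    { apply RInt_ext. intros t _. unfold bell, scal; simpl; unfold mult; simpl.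
      now replace (-1 * t * (-1 * t)) with (t * t) by ring. }
    rewrite (RInt_scal (V := R_CompleteNormedModule)) by apply ex_RInt_bell.
    rewrite <- (opp_RInt_swap (V := R_CompleteNormedModule)) by apply ex_RInt_bell.
    unfold scal, opp; simpl; unfold mult; simpl. ring. }
  rewrite Hneg. unfold plus; simpl. ring.
Qed.

Definition feynman (x t : R) : R := exp (- (x * x * (1 + t * t))) / (1 + t * t).

Lemma continuity_feynman x : continuity (feynman x).
Proof. apply continuity_of_ex_derive. intros t. unfold feynman. auto_derive. nra. Qed.

Lemma Derive_feynman x t :
  Derive (fun u => feynman u t) x = - 2 * x * exp (- (x * x * (1 + t * t))).
Proof.
  apply is_derive_unique. unfold feynman. auto_derive.
  - nra.
  - field. nra.
Qed.

Lemma continuity_2d_Derive_feynman x t :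
  continuity_2d_pt (fun u v => Derive (fun z => feynman z v) u) x t.
Proof.
  apply continuity_2d_pt_ext with (fun u v => - 2 * u * exp (- (u * u * (1 + v * v)))).
  { intros u v. now rewrite Derive_feynman. }
  apply continuity_2d_pt_mult.
  - apply continuity_2d_pt_mult; [apply continuity_2d_pt_const | apply continuity_2d_pt_id1].
  - apply continuity_1d_2d_pt_comp with (f := exp).
    { apply derivable_continuous_pt, derivable_pt_exp. }
    apply continuity_2d_pt_opp, continuity_2d_pt_mult.
    + apply continuity_2d_pt_mult; apply continuity_2d_pt_id1.
    + apply continuity_2d_pt_plus; [apply continuity_2d_pt_const|].
      apply continuity_2d_pt_mult; apply continuity_2d_pt_id2.
Qed.

(* Substituting [y = x t] turns the parameter derivative into [bell] on [0, x]. *)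
Lemma RInt_Derive_feynman x :
  RInt (fun t => Derive (fun u => feynman u t) x) 0 1 = - 2 * bell x * RInt bell 0 x.
Proof.
  transitivity (RInt (fun t => scal (- 2 * bell x) (x * bell (x * t))) 0 1).
  { apply RInt_ext. intros t _. rewrite Derive_feynman. unfold bell, scal; simpl; unfold mult; simpl.
    replace (- (x * x * (1 + t * t))) with (- (x * x) + - (x * t * (x * t))) by ring.
    rewrite exp_plus. ring. }
  rewrite (RInt_scal (V := R_CompleteNormedModule)).
  - rewrite RInt_comp_scal by apply continuity_bell.
    unfold scal; simpl; unfold mult; simpl. now rewrite Rmult_0_r, Rmult_1_r.
  - apply ex_RInt_continuity. intros t.
    apply continuity_pt_mult; [apply continuity_pt_const; now intros ? ? |].
    apply (continuity_pt_comp (fun t => x * t) bell); [|apply continuity_bell].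
    apply continuity_pt_scal, derivable_continuous_pt, derivable_pt_id.
Qed.

Lemma is_derive_RInt_bell x : is_derive (fun y => RInt bell 0 y) x (bell x).
Proof.
  apply (is_derive_RInt (V := R_NormedModule) bell _ 0).
  - apply filter_forall. intros y. apply (RInt_correct (V := R_CompleteNormedModule)), ex_RInt_bell.
  - apply continuity_pt_filterlim, continuity_bell.
Qed.

Lemma is_derive_RInt_feynman x :
  is_derive (fun y => RInt (feynman y) 0 1) x (- 2 * bell x * RInt bell 0 x).
Proof.
  rewrite <- RInt_Derive_feynman.
  apply (is_derive_RInt_param feynman).
  - apply filter_forall. intros y t _. unfold feynman. auto_derive. nra.
  - intros t _. apply continuity_2d_Derive_feynman.
  - apply filter_forall. intros y. apply ex_RInt_continuity, continuity_feynman.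
Qed.

(* [(int_0^x bell)^2 + int_0^1 feynman x] has zero derivative in [x]. *)
Lemma feynman_invariant x : 0 < x ->
  RInt bell 0 x * RInt bell 0 x + RInt (feynman x) 0 1 = PI / 4.
Proof.
  intros Hx.
  set (F := fun y => RInt bell 0 y * RInt bell 0 y + RInt (feynman y) 0 1).
  assert (HF : forall y, is_derive F y 0).
  { intros y.
    assert (H := is_derive_plus _ _ y _ _
      (is_derive_mult _ _ y _ _ (is_derive_RInt_bell y) (is_derive_RInt_bell y) Rmult_comm)
      (is_derive_RInt_feynman y)).
    unfold plus, mult in H; simpl in H.
    match type of H with is_derive _ _ ?v => replace 0 with v by ring end.
    exact H. }
  change (F x = PI / 4). rewrite <- (eq_is_derive F 0 x (fun y _ => HF y) Hx).
  unfold F. rewrite (RInt_point (V := R_CompleteNormedModule)).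
  assert (Hatan : is_RInt (feynman 0) 0 1 (minus (atan 1) (atan 0))).
  { apply (is_RInt_ext (V := R_CompleteNormedModule) (fun t => / (1 + t²))).
    - intros t _. unfold feynman, Rsqr. rewrite !Rmult_0_l, Ropp_0, exp_0.
      unfold Rdiv. now rewrite Rmult_1_l.
    - apply (is_RInt_derive (V := R_CompleteNormedModule)).
      + intros t _. apply is_derive_atan.
      + intros t _. apply (ex_derive_continuous (K := R_AbsRing) (V := R_NormedModule)).
        auto_derive. unfold Rsqr. nra. }
  rewrite (is_RInt_unique _ _ _ _ Hatan), atan_1, atan_0.
  unfold minus, plus, opp, zero; simpl. ring.
Qed.

Lemma RInt_feynman_bounds x : 0 <= RInt (feynman x) 0 1 <= exp (- (x * x)).
Proof.
  assert (Hex := ex_RInt_continuity (feynman x) 0 1 (continuity_feynman x)).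
  split.
  - apply RInt_ge_0; auto; [lra|]. intros t _. unfold feynman.
    apply Rle_mult_inv_pos; [apply Rlt_le, exp_pos | nra].
  - apply Rle_trans with (RInt (fun _ => exp (- (x * x))) 0 1).
    + apply RInt_le; auto; [lra | apply (ex_RInt_const (V := R_CompleteNormedModule)) |].
      intros t Ht. unfold feynman, Rdiv.
      apply Rle_trans with (exp (- (x * x * (1 + t * t)))).
      * rewrite <- (Rmult_1_r (exp _)) at 2. apply Rmult_le_compat_l; [apply Rlt_le, exp_pos|].
        rewrite <- Rinv_1. apply Rinv_le_contravar; nra.
      * apply exp_le_exp. nra.
    + rewrite (RInt_const (V := R_CompleteNormedModule)).
      unfold scal; simpl; unfold mult; simpl. lra.
Qed.

Lemma exp_neg_sq_le_inv x : 0 < x -> exp (- (x * x)) <= / (x * x).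
Proof.
  intros Hx. rewrite exp_Ropp. apply Rinv_le_contravar; [nra|].
  pose proof (exp_ineq1_le (x * x)). lra.
Qed.

Lemma RInt_bell_approx x : 0 < x -> Rabs (RInt bell (- x) x - sqrt PI) <= 4 / (x * x).
Proof.
  intros Hx. rewrite RInt_bell_sym.
  assert (Hinv := feynman_invariant x Hx).
  assert (Hfey := RInt_feynman_bounds x).
  assert (HI := RInt_bell_ge0 x (Rlt_le _ _ Hx)).
  assert (Hexp := exp_neg_sq_le_inv x Hx).
  set (I := RInt bell 0 x) in *. set (J := RInt (feynman x) 0 1) in *.
  assert (Hpi : sqrt PI * sqrt PI = PI) by (apply sqrt_sqrt, Rlt_le, PI_RGT_0).
  assert (Hpi1 : 1 <= sqrt PI).
  { rewrite <- sqrt_1. apply sqrt_le_1_alt. pose proof PI2_1. lra. }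
  assert (E : 2 * I - sqrt PI = - (4 * J) / (2 * I + sqrt PI)).
  { apply (Rmult_eq_reg_r (2 * I + sqrt PI)); [|lra].
    unfold Rdiv. rewrite Rmult_assoc, Rinv_l by lra. nra. }
  rewrite E, Rabs_div, Rabs_Ropp, !Rabs_right by lra.
  apply Rle_trans with (4 * J).
  - apply Rmult_le_reg_r with (2 * I + sqrt PI); [lra|].
    unfold Rdiv. rewrite Rmult_assoc, Rinv_l by lra. nra.
  - unfold Rdiv. lra.
Qed.

(** * Integrals over the real line *)

(* Integrals over [R] are taken as limits of [RInt f (-n) n]; continuity makes
   every partial integral exist. *)
Definition is_sym_int (f : R -> R) (l : R) : Prop :=
  continuity f /\ Un_cv (fun n => RInt f (- INR n) (INR n)) l.

Definition sym_int (f : R -> R) : R := real (Lim_seq (fun n => RInt f (- INR n) (INR n))).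

Lemma sym_int_correct f l : is_sym_int f l -> sym_int f = l.
Proof.
  intros [_ Hl]. unfold sym_int. rewrite (is_lim_seq_unique _ l); [easy|].
  now apply is_lim_seq_Reals.
Qed.

Lemma is_sym_int_improper_int f l : is_sym_int f l -> improper_int f l.
Proof.
  intros [Hf Hl]. exists (fun n => RInt f (- INR n) (INR n)). split; [|easy].
  intros n. exists (ex_RInt_Reals_0 _ _ _ (ex_RInt_continuity f _ _ Hf)).
  now rewrite <- RInt_Reals.
Qed.

Lemma is_sym_int_ext f g l : (forall t, f t = g t) -> is_sym_int f l -> is_sym_int g l.
Proof. intros E Hf. now replace g with f by (apply functional_extensionality, E). Qed.

Lemma is_sym_int_lin f g l m p q : is_sym_int f l -> is_sym_int g m ->
  is_sym_int (fun t => p * f t + q * g t) (p * l + q * m).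
Proof.
  intros [Hf Hl] [Hg Hm]. split.
  { apply (continuity_plus (fun t => p * f t) (fun t => q * g t));
      apply (continuity_scal _ _); assumption. }
  apply Un_cv_ext with (fun n => p * RInt f (- INR n) (INR n) + q * RInt g (- INR n) (INR n)).
  - intros n. symmetry.
    rewrite (RInt_plus (V := R_CompleteNormedModule) (fun t => scal p (f t)) (fun t => scal q (g t)));
      try apply (ex_RInt_scal (V := R_CompleteNormedModule)); try now apply ex_RInt_continuity.
    rewrite !(RInt_scal (V := R_CompleteNormedModule)) by now apply ex_RInt_continuity.
    reflexivity.
  - apply CV_plus; apply CV_mult; auto; apply is_lim_seq_Reals, is_lim_seq_const.
Qed.

Lemma is_sym_int_scal f l p : is_sym_int f l -> is_sym_int (fun t => p * f t) (p * l).
Proof.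
  intros Hf. replace (p * l) with (p * l + 0 * l) by ring.
  apply is_sym_int_ext with (fun t => p * f t + 0 * f t); [intros; ring|].
  now apply is_sym_int_lin.
Qed.

Lemma is_sym_int_le f g l m : is_sym_int f l -> is_sym_int g m ->
  (forall t, f t <= g t) -> l <= m.
Proof.
  intros [Hf Hl] [Hg Hm] Hfg. eapply Rle_cv_lim; [| exact Hl | exact Hm].
  intros n. apply RInt_le; auto using ex_RInt_continuity. pose proof (pos_INR n). lra.
Qed.

Lemma is_sym_int_abs_le f g l m : is_sym_int f l -> is_sym_int g m ->
  (forall t, Rabs (f t) <= g t) -> Rabs l <= m.
Proof.
  intros Hf Hg Hfg. apply Rabs_le. split.
  - replace (- m) with (-1 * m) by ring.
    apply (is_sym_int_le _ _ _ _ (is_sym_int_scal _ _ (-1) Hg) Hf).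
    intros t. specialize (Hfg t). apply Rabs_le_between in Hfg. lra.
  - apply (is_sym_int_le _ _ _ _ Hf Hg).
    intros t. specialize (Hfg t). apply Rabs_le_between in Hfg. lra.
Qed.

Lemma RInt_le_widen f a b a' b' : a' <= a -> a <= b -> b <= b' -> continuity f ->
  (forall t, 0 <= f t) -> RInt f a b <= RInt f a' b'.
Proof.
  intros Ha Hab Hb Hf Hpos.
  rewrite <- (RInt_Chasles (V := R_CompleteNormedModule) f a' a b') by now apply ex_RInt_continuity.
  rewrite <- (RInt_Chasles (V := R_CompleteNormedModule) f a b b') by now apply ex_RInt_continuity.
  unfold plus; simpl.
  assert (0 <= RInt f a' a) by (apply RInt_ge_0; auto using ex_RInt_continuity).
  assert (0 <= RInt f b b') by (apply RInt_ge_0; auto using ex_RInt_continuity).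
  lra.
Qed.

Lemma RInt_sym_growing f : continuity f -> (forall t, 0 <= f t) ->
  Un_growing (fun n => RInt f (- INR n) (INR n)).
Proof.
  intros Hf Hpos n. rewrite S_INR. pose proof (pos_INR n).
  apply RInt_le_widen; auto; lra.
Qed.

Lemma is_sym_int_dominated f g m : continuity f -> (forall t, 0 <= f t <= g t) ->
  is_sym_int g m -> exists l, is_sym_int f l.
Proof.
  intros Hf Hfg [Hg Hm].
  assert (Hg_pos : forall t, 0 <= g t) by (intros t; specialize (Hfg t); lra).
  assert (Hbound : forall n, RInt f (- INR n) (INR n) <= m).
  { intros n. apply Rle_trans with (RInt g (- INR n) (INR n)).
    - apply RInt_le; auto using ex_RInt_continuity; [pose proof (pos_INR n); lra|].
      intros t _. apply Hfg.
    - apply (growing_ineq _ _ (RInt_sym_growing g Hg Hg_pos) Hm). }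
  destruct (growing_cv _ (RInt_sym_growing f Hf (fun t => proj1 (Hfg t)))) as [l Hl].
  { exists m. intros x [n ->]. apply Hbound. }
  now exists l.
Qed.

Lemma is_sym_int_shift f l s : (forall t, 0 <= f t) -> is_sym_int f l ->
  is_sym_int (fun t => f (t + s)) l.
Proof.
  intros Hpos [Hf Hl]. split.
  { intros t. apply (continuity_pt_comp (fun t => t + s) f); [|apply Hf].
    apply derivable_continuous_pt. reg. }
  assert (E : forall n, RInt (fun t => f (t + s)) (- INR n) (INR n) = RInt f (- INR n + s) (INR n + s)).
  { intros n. transitivity (RInt f (1 * - INR n + s) (1 * INR n + s)); [| f_equal; ring].
    rewrite <- (RInt_comp_lin (V := R_CompleteNormedModule)) by now apply ex_RInt_continuity.
    apply RInt_ext. intros t _. unfold scal; simpl; unfold mult; simpl. now rewrite !Rmult_1_l. }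
  (* The shifted window is squeezed between the windows of radius [n - N] and [n + N]. *)
  destruct (INR_unbounded (Rabs s)) as [N HN].
  assert (Hs := proj1 (Rabs_le_between s (INR N)) (Rlt_le _ _ HN)).
  intros e He. destruct (Hl e He) as [N1 HN1]. exists (N1 + N)%nat. intros n Hn.
  rewrite E. unfold Rdist in *.
  assert (Hlo := HN1 (n - N)%nat ltac:(lia)). assert (Hhi := HN1 (n + N)%nat ltac:(lia)).
  rewrite minus_INR in Hlo by lia. rewrite plus_INR in Hhi.
  assert (HNn : INR N <= INR n) by (apply le_INR; lia).
  assert (L1 : RInt f (- (INR n - INR N)) (INR n - INR N) <= RInt f (- INR n + s) (INR n + s))
    by (apply RInt_le_widen; auto; lra).
  assert (L2 : RInt f (- INR n + s) (INR n + s) <= RInt f (- (INR n + INR N)) (INR n + INR N))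
    by (apply RInt_le_widen; auto; lra).
  apply Rabs_def2 in Hlo. apply Rabs_def2 in Hhi. apply Rabs_def1; lra.
Qed.

Lemma Un_cv_of_inv_bound u l C : (forall n, (0 < n)%nat -> Rabs (u n - l) <= C / INR n) ->
  Un_cv u l.
Proof.
  intros Hu e He.
  destruct (INR_unbounded (Rmax C 0 / e)) as [N HN].
  exists (S N). intros n Hn. unfold Rdist.
  assert (Hn0 : 0 < INR n) by (apply lt_0_INR; lia).
  assert (HNn : INR N < INR n) by (apply lt_INR; lia).
  apply Rle_lt_trans with (C / INR n); [apply Hu; lia|].
  apply Rle_lt_trans with (Rmax C 0 / INR n).
  { unfold Rdiv. apply Rmult_le_compat_r; [left; now apply Rinv_0_lt_compat | apply Rmax_l]. }
  assert (HC : Rmax C 0 < e * INR n).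
  { apply (Rmult_lt_compat_l e) in HN; [|lra].
    replace (e * (Rmax C 0 / e)) with (Rmax C 0) in HN by (field; lra). nra. }
  apply (Rmult_lt_reg_r (INR n)); auto. unfold Rdiv. rewrite Rmult_assoc, Rinv_l, Rmult_1_r by lra.
  lra.
Qed.

(** * Gaussian kernels *)

Definition gauss_kernel (s c t : R) : R := exp (- ((t - c) * (t - c)) / (2 * s ^ 2)).

Definition gauss_mass (s : R) : R := s * sqrt (2 * PI).

Lemma continuity_gauss_kernel s c : continuity (gauss_kernel s c).
Proof. apply continuity_of_ex_derive. intros t. unfold gauss_kernel. auto_derive. auto. Qed.

Lemma gauss_kernel_pos s c t : 0 < gauss_kernel s c t.
Proof. apply exp_pos. Qed.

Lemma gauss_mass_pos s : 0 < s -> 0 < gauss_mass s.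
Proof.
  intros Hs. apply Rmult_lt_0_compat; auto. apply sqrt_lt_R0. pose proof PI_RGT_0. lra.
Qed.

Lemma is_sym_int_gauss_kernel_0 s : 0 < s -> is_sym_int (gauss_kernel s 0) (gauss_mass s).
Proof.
  intros Hs. split; [apply continuity_gauss_kernel|].
  set (k := s * sqrt 2).
  assert (Hk : 0 < k) by (apply Rmult_lt_0_compat; auto; apply sqrt_lt_R0; lra).
  assert (Hkk : k * k = 2 * s ^ 2).
  { unfold k. replace (s * sqrt 2 * (s * sqrt 2)) with (s * s * (sqrt 2 * sqrt 2)) by ring.
    rewrite sqrt_sqrt by lra. ring. }
  assert (Hmass : gauss_mass s = k * sqrt PI).
  { unfold gauss_mass, k. rewrite sqrt_mult by (pose proof PI_RGT_0; lra). ring. }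
  assert (E : forall n, RInt (gauss_kernel s 0) (- INR n) (INR n)
                        = k * RInt bell (- (INR n / k)) (INR n / k)).
  { intros n.
    transitivity (RInt (gauss_kernel s 0) (k * - (INR n / k)) (k * (INR n / k))); [f_equal; field; lra|].
    rewrite <- RInt_comp_scal by apply continuity_gauss_kernel.
    rewrite <- (RInt_scal (V := R_CompleteNormedModule)) by apply ex_RInt_bell.
    apply RInt_ext. intros y _. unfold gauss_kernel, bell, scal; simpl; unfold mult; simpl.
    replace (2 * (s * (s * 1))) with (k * k) by (rewrite Hkk; ring).
    do 2 f_equal. field. lra. }
  apply Un_cv_of_inv_bound with (4 * (k * k * k)). intros n Hn.
  assert (Hn1 : 1 <= INR n) by (apply (le_INR 1); lia).
  assert (Hy : 0 < INR n / k) by (apply Rdiv_lt_0_compat; lra).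
  rewrite E, Hmass, <- Rmult_minus_distr_l, Rabs_mult, (Rabs_right k) by lra.
  apply Rle_trans with (k * (4 / (INR n / k * (INR n / k)))).
  - apply Rmult_le_compat_l; [lra|]. now apply RInt_bell_approx.
  - replace (k * (4 / (INR n / k * (INR n / k)))) with (4 * (k * k * k) / INR n / INR n)
      by (field; lra).
    assert (Hinv : 0 < / INR n <= 1).
    { split; [apply Rinv_0_lt_compat; lra | rewrite <- Rinv_1; apply Rinv_le_contravar; lra]. }
    assert (0 <= 4 * (k * k * k) * / INR n) by (apply Rmult_le_pos; nra).
    unfold Rdiv. nra.
Qed.

Lemma is_sym_int_gauss_kernel s c : 0 < s -> is_sym_int (gauss_kernel s c) (gauss_mass s).
Proof.
  intros Hs. apply is_sym_int_ext with (fun t => gauss_kernel s 0 (t + - c)).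
  - intros t. unfold gauss_kernel. now replace (t + - c - 0) with (t - c) by ring.
  - apply is_sym_int_shift; [intros; apply Rlt_le, gauss_kernel_pos|].
    now apply is_sym_int_gauss_kernel_0.
Qed.

(* Completing the square: the moment generating function of a Gaussian. *)
Lemma is_sym_int_gauss_kernel_exp s c b : 0 < s ->
  is_sym_int (fun t => gauss_kernel s c t * exp (b * t))
    (exp (b * c + b * b * s ^ 2 / 2) * gauss_mass s).
Proof.
  intros Hs.
  apply is_sym_int_ext with (fun t => exp (b * c + b * b * s ^ 2 / 2) * gauss_kernel s (c + b * s ^ 2) t).
  - intros t. unfold gauss_kernel. rewrite <- !exp_plus. f_equal. field. lra.
  - now apply is_sym_int_scal, is_sym_int_gauss_kernel.
Qed.

(** * The function omega *)

Lemma omega_bounds u : 0 < omega u <= 1.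
Proof.
  unfold omega. pose proof (exp_pos (- (2 * u))). split.
  - apply Rinv_0_lt_compat. lra.
  - rewrite <- Rinv_1. apply Rinv_le_contravar; lra.
Qed.

Lemma omega_lipschitz u v : Rabs (omega u - omega v) <= Rabs (u - v).
Proof.
  set (w t := exp (- (2 * t))).
  assert (Hderiv : forall t, derivable_pt_lim omega t (2 * w t / ((1 + w t) * (1 + w t)))).
  { intros t. apply is_derive_Reals. unfold omega, w. auto_derive.
    - pose proof (exp_pos (- (2 * t))). lra.
    - pose proof (exp_pos (- (2 * t))). field. lra. }
  assert (Hbound : forall t, Rabs (2 * w t / ((1 + w t) * (1 + w t))) <= 1).
  { intros t. assert (Hw : 0 < w t) by apply exp_pos.
    rewrite Rabs_right by (apply Rle_ge, Rle_mult_inv_pos; nra).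
    apply (Rmult_le_reg_r ((1 + w t) * (1 + w t))); [nra|].
    unfold Rdiv. rewrite Rmult_assoc, Rinv_l by nra. nra. }
  destruct (Rtotal_order u v) as [H | [-> | H]].
  - destruct (MVT_cor2 omega _ u v H (fun t _ => Hderiv t)) as [t [Ht _]].
    rewrite <- Rabs_Ropp, Ropp_minus_distr, Ht, Rabs_mult, <- (Rabs_Ropp (u - v)), Ropp_minus_distr.
    rewrite <- (Rmult_1_l (Rabs (v - u))) at 2.
    apply Rmult_le_compat_r; [apply Rabs_pos | apply Hbound].
  - rewrite !Rminus_diag, Rabs_R0. lra.
  - destruct (MVT_cor2 omega _ v u H (fun t _ => Hderiv t)) as [t [Ht _]].
    rewrite Ht, Rabs_mult. rewrite <- (Rmult_1_l (Rabs (u - v))) at 2.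
    apply Rmult_le_compat_r; [apply Rabs_pos | apply Hbound].
Qed.

(* [1 - omega y = w / (1 + w)] with [w = exp (-2y)], which is below [w] for [y >= 0]
   and below [1] otherwise. *)
Lemma omega_ge_1_minus_exp lam y : 0 <= lam <= 2 -> 1 - exp (- (lam * y)) <= omega y.
Proof.
  intros Hlam. set (w := exp (- (2 * y))).
  assert (Hw : 0 < w) by apply exp_pos.
  assert (E : 1 - omega y = w / (1 + w)) by (unfold omega; fold w; field; lra).
  assert (Hfrac : w / (1 + w) <= Rmin w 1).
  { apply Rmin_glb; apply (Rmult_le_reg_r (1 + w)); try lra;
      unfold Rdiv; rewrite Rmult_assoc, Rinv_l; nra. }
  assert (Rmin w 1 <= exp (- (lam * y))).
  { destruct (Rle_or_lt 0 y) as [Hy | Hy].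
    - apply Rle_trans with w; [apply Rmin_l | apply exp_le_exp; nra].
    - apply Rle_trans with 1; [apply Rmin_r|]. rewrite <- exp_0. apply exp_le_exp. nra. }
  lra.
Qed.

Lemma continuity_of_lipschitz g L : 0 <= L ->
  (forall u v, Rabs (g u - g v) <= L * Rabs (u - v)) -> continuity g.
Proof.
  intros HL Hg x e He. exists (e / (L + 1)). split; [apply Rdiv_lt_0_compat; lra|].
  intros y [_ Hy]. simpl in *. unfold R_dist in *.
  apply Rle_lt_trans with (L * Rabs (y - x)); [apply Hg|].
  apply Rle_lt_trans with (L * (e / (L + 1))); [apply Rmult_le_compat_l; lra|].
  apply (Rmult_lt_reg_r (L + 1)); [lra|].
  unfold Rdiv. rewrite Rmult_assoc, (Rmult_assoc e), Rinv_l by lra. nra.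
Qed.

(** * Iterated Gaussian integrals *)

Definition bounded_lipschitz (g : R -> R) (B : R) : Prop :=
  (forall u, 0 <= g u <= B) /\ (forall u v, Rabs (g u - g v) <= B * Rabs (u - v)).

Definition gauss_conv (s c b : R) (g : R -> R) (u : R) : R :=
  sym_int (fun t => gauss_kernel s c t * g (u + b * t)).

Section GaussConvolution.

Variables (s c b B : R) (g : R -> R).
Hypothesis Hs : 0 < s.
Hypothesis Hg : bounded_lipschitz g B.

Lemma is_sym_int_gauss_conv u :
  is_sym_int (fun t => gauss_kernel s c t * g (u + b * t)) (gauss_conv s c b g u).
Proof.
  destruct Hg as [Hbnd Hlip].
  assert (HB : 0 <= B) by (specialize (Hbnd 0); lra).
  assert (Hcont : continuity (fun t => gauss_kernel s c t * g (u + b * t))).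
  { apply (continuity_mult (gauss_kernel s c) (fun t => g (u + b * t)));
      [apply continuity_gauss_kernel|].
    intros t. apply (continuity_pt_comp (fun t => u + b * t) g).
    - apply derivable_continuous_pt. reg.
    - now apply (continuity_of_lipschitz g B). }
  destruct (is_sym_int_dominated _ (fun t => B * gauss_kernel s c t) (B * gauss_mass s) Hcont)
    as [l Hl].
  - intros t. pose proof (gauss_kernel_pos s c t). specialize (Hbnd (u + b * t)). nra.
  - now apply is_sym_int_scal, is_sym_int_gauss_kernel.
  - unfold gauss_conv. now rewrite (sym_int_correct _ _ Hl).
Qed.

Lemma bounded_lipschitz_gauss_conv : bounded_lipschitz (gauss_conv s c b g) (B * gauss_mass s).
Proof.
  destruct Hg as [Hbnd Hlip].
  assert (HM := is_sym_int_gauss_kernel s c Hs).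
  split.
  - intros u. split.
    + rewrite <- (Rmult_0_l (gauss_mass s)).
      apply (is_sym_int_le _ _ _ _ (is_sym_int_scal _ _ 0 HM) (is_sym_int_gauss_conv u)).
      intros t. pose proof (gauss_kernel_pos s c t). specialize (Hbnd (u + b * t)). nra.
    + apply (is_sym_int_le _ _ _ _ (is_sym_int_gauss_conv u) (is_sym_int_scal _ _ B HM)).
      intros t. pose proof (gauss_kernel_pos s c t). specialize (Hbnd (u + b * t)). nra.
  - intros u v.
    replace (gauss_conv s c b g u - gauss_conv s c b g v) with (1 * gauss_conv s c b g u + -1 * gauss_conv s c b g v)
      by ring.
    replace (B * gauss_mass s * Rabs (u - v)) with (B * Rabs (u - v) * gauss_mass s) by ring.
    apply (is_sym_int_abs_le _ _ _ _
             (is_sym_int_lin _ _ _ _ 1 (-1) (is_sym_int_gauss_conv u) (is_sym_int_gauss_conv v))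
             (is_sym_int_scal _ _ _ HM)).
    intros t. pose proof (gauss_kernel_pos s c t).
    replace (1 * (gauss_kernel s c t * g (u + b * t)) + -1 * (gauss_kernel s c t * g (v + b * t)))
      with (gauss_kernel s c t * (g (u + b * t) - g (v + b * t))) by ring.
    rewrite Rabs_mult, Rabs_right by lra.
    replace (u - v) with ((u + b * t) - (v + b * t)) by ring.
    specialize (Hlip (u + b * t) (v + b * t)). nra.
Qed.

Lemma gauss_conv_lower lam K u : (forall v, B - K * exp (- lam * v) <= g v) ->
  B * gauss_mass s
  - K * exp (- lam * u) * (exp (- lam * b * c + (lam * b) * (lam * b) * s ^ 2 / 2) * gauss_mass s)
  <= gauss_conv s c b g u.
Proof.
  intros Hlow.
  assert (Hexp := is_sym_int_gauss_kernel_exp s c (- lam * b) Hs).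
  replace ((lam * b) * (lam * b)) with ((- lam * b) * (- lam * b)) by ring.
  eapply Rle_trans; [right | apply (is_sym_int_le _ _ _ _
    (is_sym_int_lin _ _ _ _ B (- (K * exp (- lam * u))) (is_sym_int_gauss_kernel s c Hs) Hexp)
    (is_sym_int_gauss_conv u))]; [ring|].
  intros t. specialize (Hlow (u + b * t)). pose proof (gauss_kernel_pos s c t).
  replace (exp (- lam * (u + b * t))) with (exp (- lam * u) * exp (- lam * b * t)) in Hlow
    by (rewrite <- exp_plus; f_equal; ring).
  nra.
Qed.

End GaussConvolution.

(* [omega_gauss_int s a c k u] is the integral of [omega (u + sum_(i<k) a i * t i)]
   against [prod_(i<k) gauss_kernel s (c i) (t i)], the last coordinate outermost. *)
Fixpoint omega_gauss_int (s : R) (a c : nat -> R) (k : nat) : R -> R :=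
  match k with
  | O => omega
  | S k => gauss_conv s (c k) (a k) (omega_gauss_int s a c k)
  end.

Lemma bounded_lipschitz_omega_gauss_int s a c k : 0 < s ->
  bounded_lipschitz (omega_gauss_int s a c k) (gauss_mass s ^ k).
Proof.
  intros Hs. induction k as [|k IHk]; simpl.
  - split; [intros u; pose proof (omega_bounds u); lra|].
    intros u v. rewrite Rmult_1_l. apply omega_lipschitz.
  - rewrite Rmult_comm. now apply bounded_lipschitz_gauss_conv.
Qed.

Lemma omega_gauss_int_lower s a c lam k u : 0 < s -> 0 <= lam <= 2 ->
  gauss_mass s ^ k * (1 - exp (- lam * (u + dot k a c) + lam * lam * s ^ 2 / 2 * dot k a a))
  <= omega_gauss_int s a c k u.
Proof.
  intros Hs Hlam. revert u. induction k as [|k IHk]; intros u; simpl.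
  - rewrite Rmult_0_r, !Rplus_0_r, Rmult_1_l. replace (- lam * u) with (- (lam * u)) by ring.
    now apply omega_ge_1_minus_exp.
  - set (Q := - lam * dot k a c + lam * lam * s ^ 2 / 2 * dot k a a).
    eapply Rle_trans;
      [| apply (gauss_conv_lower s (c k) (a k) (gauss_mass s ^ k) _ Hs
                 (bounded_lipschitz_omega_gauss_int s a c k Hs) lam (gauss_mass s ^ k * exp Q))].
    + right.
      replace (- lam * (u + (dot k a c + a k * c k)) + lam * lam * (s * (s * 1)) / 2 * (dot k a a + a k * a k))
        with (Q + - lam * u + (- lam * a k * c k + lam * a k * (lam * a k) * s ^ 2 / 2))
        by (unfold Q; field).
      rewrite !exp_plus. ring.
    + intros v. specialize (IHk v).
      replace (exp (- lam * (v + dot k a c) + lam * lam * s ^ 2 / 2 * dot k a a))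
        with (exp Q * exp (- lam * v)) in IHk by (rewrite <- exp_plus; unfold Q; f_equal; ring).
      lra.
Qed.

Fixpoint kernel_prod (s : R) (c : nat -> R) (k : nat) (x : nat -> R) : R :=
  match k with
  | O => 1
  | S k => kernel_prod s c k x * gauss_kernel s (c k) (x k)
  end.

Lemma upd_lt x j t i : (i < j)%nat -> upd x j t i = x i.
Proof. intros H. unfold upd. now destruct (Nat.eqb_spec i j); [lia|]. Qed.

Lemma upd_eq x j t : upd x j t j = t.
Proof. unfold upd. now rewrite Nat.eqb_refl. Qed.

Lemma dot_upd k j a x t : (k <= j)%nat -> dot k a (upd x j t) = dot k a x.
Proof.
  induction k as [|k IHk]; intros H; simpl; auto.
  rewrite IHk, upd_lt by lia. reflexivity.
Qed.

Lemma kernel_prod_upd s c k j x t : (k <= j)%nat -> kernel_prod s c k (upd x j t) = kernel_prod s c k x.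
Proof.
  induction k as [|k IHk]; intros H; simpl; auto.
  rewrite IHk, upd_lt by lia. reflexivity.
Qed.

Lemma int_Rd_omega_gauss_int s a c k : 0 < s -> forall u C,
  int_Rd k (fun x => C * omega (u + dot k a x) * kernel_prod s c k x) (C * omega_gauss_int s a c k u).
Proof.
  intros Hs. induction k as [|k IHk]; intros u C; simpl.
  - now rewrite Rplus_0_r, Rmult_1_r.
  - exists (fun t => C * (gauss_kernel s (c k) t * omega_gauss_int s a c k (u + a k * t))).
    split.
    + intros t. cbv beta.
      replace (C * (gauss_kernel s (c k) t * omega_gauss_int s a c k (u + a k * t)))
        with (gauss_kernel s (c k) t * C * omega_gauss_int s a c k (u + a k * t)) by ring.
      replace (fun x => C * omega (u + (dot k a (upd x k t) + a k * upd x k t k))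
                        * (kernel_prod s c k (upd x k t) * gauss_kernel s (c k) (upd x k t k)))
        with (fun x => (gauss_kernel s (c k) t * C) * omega ((u + a k * t) + dot k a x)
                       * kernel_prod s c k x).
      { apply IHk. }
      apply functional_extensionality. intros x.
      rewrite dot_upd, kernel_prod_upd, upd_eq by lia.
      replace (u + (dot k a x + a k * t)) with (u + a k * t + dot k a x) by ring. ring.
    + apply is_sym_int_improper_int, is_sym_int_scal, (is_sym_int_gauss_conv _ _ _ (gauss_mass s ^ k));
        auto using bounded_lipschitz_omega_gauss_int.
Qed.

(** * The expectation *)

Lemma dot_divl k a x q : dot k (fun i => a i / q) x = dot k a x / q.
Proof. induction k as [|k IHk]; simpl; [|rewrite IHk]; unfold Rdiv; ring. Qed.

Lemma dot_divr k x a q : dot k x (fun i => a i / q) = dot k x a / q.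
Proof. induction k as [|k IHk]; simpl; [|rewrite IHk]; unfold Rdiv; ring. Qed.

Lemma dot_self_ge0 k x : 0 <= dot k x x.
Proof. induction k as [|k IHk]; simpl; nra. Qed.

Lemma dot_self_pos k x i : (i < k)%nat -> x i <> 0 -> 0 < dot k x x.
Proof.
  induction k as [|k IHk]; intros Hi Hx; [lia|]. simpl.
  pose proof (dot_self_ge0 k x).
  destruct (Nat.eq_dec i k) as [-> | Hik].
  - assert (0 < x k * x k) by (apply Rsqr_pos_lt; auto). lra.
  - assert (0 < dot k x x) by (apply IHk; auto; lia). nra.
Qed.

Lemma exp_sqdist_kernel_prod s c k x :
  exp (- dot k (vsub x c) (vsub x c) / (2 * s ^ 2)) = kernel_prod s c k x.
Proof.
  induction k as [|k IHk]; simpl.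
  - unfold Rdiv. now rewrite Ropp_0, Rmult_0_l, exp_0.
  - rewrite <- IHk. unfold gauss_kernel, vsub. rewrite <- exp_plus. f_equal.
    simpl. unfold Rdiv. ring.
Qed.

Lemma Rpower_gauss_mass s d : 0 < s -> Rpower (2 * PI * s ^ 2) (INR d / 2) = gauss_mass s ^ d.
Proof.
  intros Hs. pose proof PI_RGT_0.
  assert (Hpos : 0 < 2 * PI * s ^ 2) by (apply Rmult_lt_0_compat; [lra | apply pow_lt; lra]).
  replace (INR d / 2) with (/ 2 * INR d) by field.
  rewrite <- Rpower_mult, Rpower_sqrt, Rpower_pow by (auto; apply sqrt_lt_R0; auto).
  unfold gauss_mass. f_equal.
  rewrite sqrt_mult, sqrt_pow2 by (try apply pow2_ge_0; lra). ring.
Qed.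

Section GaussianExpectation.

Variables (d : nat) (mu th : nat -> R) (s : R).
Hypothesis Hs : 0 < s.

Let alpha (i : nat) : R := th i / s ^ 2.

Lemma gauss_expect_omega_dot :
  gauss_expect d mu s (fun x => omega (dot d th x / s ^ 2))
    (omega_gauss_int s alpha mu d 0 / gauss_mass s ^ d).
Proof.
  unfold gauss_expect, gauss_density. rewrite Rpower_gauss_mass by auto.
  replace (fun x => omega (dot d th x / s ^ 2) *
              (/ gauss_mass s ^ d * exp (- dot d (vsub x mu) (vsub x mu) / (2 * s ^ 2))))
    with (fun x => / gauss_mass s ^ d * omega (0 + dot d alpha x) * kernel_prod s mu d x).
  - unfold Rdiv. rewrite Rmult_comm. now apply int_Rd_omega_gauss_int.
  - apply functional_extensionality. intros x.
    rewrite exp_sqdist_kernel_prod, Rplus_0_l. unfold alpha. rewrite dot_divl. ring.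
Qed.

Lemma omega_gauss_int_normalized_lower lam : 0 <= lam <= 2 ->
  1 - exp (- lam * (dot d th mu / s ^ 2) + lam * lam / 2 * (dot d th th / s ^ 2))
  <= omega_gauss_int s alpha mu d 0 / gauss_mass s ^ d.
Proof.
  intros Hlam.
  assert (HM : 0 < gauss_mass s ^ d) by (apply pow_lt, gauss_mass_pos, Hs).
  apply (Rmult_le_reg_r (gauss_mass s ^ d)); auto.
  replace (omega_gauss_int s alpha mu d 0 / gauss_mass s ^ d * gauss_mass s ^ d)
    with (omega_gauss_int s alpha mu d 0) by (field; lra).
  rewrite Rmult_comm.
  eapply Rle_trans; [right | apply (omega_gauss_int_lower s alpha mu lam d 0 Hs Hlam)].
  unfold alpha. rewrite dot_divl, dot_divr, dot_divl. do 3 f_equal. field. lra.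
Qed.

End GaussianExpectation.

(* Take the unconstrained minimiser [lam = mu / v] when it is at most [2], else [lam = 2]. *)
Lemma exists_tilt_lt mu v A B : 0 < A < B -> A <= mu -> 0 <= v <= B ->
  exists lam, 0 <= lam <= 2 /\ - lam * mu + lam * lam / 2 * v < - (A * A / B) / 5.
Proof.
  intros HAB Hmu Hv.
  assert (HAAB : 0 < A * A / B < A).
  { split; [apply Rdiv_lt_0_compat; nra|].
    apply (Rmult_lt_reg_r B); [lra|]. unfold Rdiv. rewrite Rmult_assoc, Rinv_l by lra. nra. }
  destruct (Rle_or_lt mu (2 * v)) as [Hsmall | Hlarge].
  - assert (Hv0 : 0 < v) by lra. exists (mu / v). split.
    + split; [apply Rdiv_le_0_compat; lra|].
      apply (Rmult_le_reg_r v); auto. unfold Rdiv. rewrite Rmult_assoc, Rinv_l by lra. lra.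
    + replace (- (mu / v) * mu + mu / v * (mu / v) / 2 * v) with (- (mu * mu / v) / 2)
        by (field; lra).
      assert (A * A / B <= mu * mu / v).
      { apply Rle_trans with (mu * mu / B); unfold Rdiv.
        - apply Rmult_le_compat_r; [left; apply Rinv_0_lt_compat |]; nra.
        - apply Rmult_le_compat_l; [nra | apply Rinv_le_contravar; lra]. }
      lra.
  - exists 2. split; [lra|]. nra.
Qed.

Lemma in_D_tilt d thstar a r th sigma : 0 < sigma -> 0 < dot d thstar thstar ->
  0 < a < 1 -> 1 <= r -> in_D d thstar a r th ->
  exists lam, 0 <= lam <= 2 /\
    - lam * (dot d th thstar / sigma ^ 2) + lam * lam / 2 * (dot d th th / sigma ^ 2)
    < - ((a * (vnorm d thstar / sigma) / r) ^ 2) / 5.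
Proof.
  intros Hs HS Ha Hr [HH HB]. unfold in_H, in_B, vnorm in *.
  set (S := dot d thstar thstar) in *.
  rewrite pow2_sqrt in HH by lra.
  assert (HV : dot d th th <= r * r * S).
  { pose proof (sqrt_pos (dot d th th)). pose proof (sqrt_pos S).
    rewrite <- (sqrt_sqrt (dot d th th)), <- (sqrt_sqrt S) by (auto using dot_self_ge0; lra).
    nra. }
  set (w := / sigma ^ 2).
  assert (Hw : 0 < w) by (apply Rinv_0_lt_compat, pow_lt, Hs).
  replace ((a * (sqrt S / sigma) / r) ^ 2) with (a * S * w * (a * S * w) / (r * r * S * w)).
  - assert (HSw : 0 < S * w) by nra.
    assert (Hrr : a < r * r) by nra.
    pose proof (dot_self_ge0 d th).
    unfold Rdiv. fold w.
    apply exists_tilt_lt; repeat split; nra.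
  - unfold w. rewrite <- (pow2_sqrt S) at 1 2 3 by lra.
    field. pose proof (sqrt_lt_R0 S HS). repeat split; lra.
Qed.

Theorem mainTheorem13 (d : nat) (sigma : R) (thstar : nat -> R) (a r : R)
  (th : nat -> R) :
  (1 <= d)%nat -> 0 < sigma ->
  (exists i : nat, (i < d)%nat /\ thstar i <> 0) ->
  0 < a < 1 -> 1 <= r ->
  in_D d thstar a r th ->
  exists E : R,
    gauss_expect d thstar sigma (fun x => omega (dot d th x / sigma ^ 2)) E /\
    E > 1 - exp (- ((a * (vnorm d thstar / sigma) / r) ^ 2) / 5).
Proof.
  intros _ Hs [i [Hi Hne]] Ha Hr HD.
  assert (HS : 0 < dot d thstar thstar) by now apply (dot_self_pos d thstar i).
  destruct (in_D_tilt d thstar a r th sigma Hs HS Ha Hr HD) as [lam [Hlam Hlt]].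
  eexists. split; [now apply gauss_expect_omega_dot|].
  eapply Rlt_le_trans; [| now apply omega_gauss_int_normalized_lower].
  apply Rplus_lt_compat_l, Ropp_lt_contravar, exp_increasing, Hlt.
Qed.
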